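(* Let $c\ge1$ and let $\Gamma=(V,E)$ be a $c$-uniform unoriented hypergraph with $N=|V|$ vertices, $M=|E|\ge1$ edges and no isolated vertices; let $\overline{\deg}$ be its average degree (so $c/\overline{\deg}=N/M$) and $\mu_1$ the smallest eigenvalue of its edge Laplacian $L^1$. Then $\mu_1\le c/\overline{\deg}$, and \[ \chi'(\Gamma)\;\ge\;\frac{c-\mu_1}{c/\overline{\deg}-\mu_1}, \] where, if $\mu_1=c/\overline{\deg}$, the right-hand side is interpreted as $1$. Moreover, the inequality is sharp: for integers $p\ge2$ and $1\le k\le c-1$, the $c$-uniform hyperflower with $p$ petals and $k$ central vertices attains equality.
   Context: A hypergraph has finite vertex set $V$ and edge set $E\subseteq\mathcal P(V)$; it is $c$-uniform if $|e|=c$ for all $e$, and unoriented means all incidences have orientation $+1$, so the incidence matrix $\mathcal I$ is the $N\times M$ matrix with $\mathcal I_{v,e}=1$ if $v\in e$ and $0$ otherwise. $\deg v=|\{e: v\in e\}|\ge1$, $D=\mathrm{diag}(\deg v)$, $\overline{\deg}=\frac1N\sum_v\deg v$. The edge Laplacian is the $M\times M$ matrix $L^1=\mathcal I^\top D^{-1}\mathcal I$, with eigenvalues $0\le\mu_1\le\dots\le\mu_M$. A proper strong $k$-edge-coloring is a map $c'\colon E\to\{1,\dots,k\}$ such that $c'(e_1)=c'(e_2)$ with $e_1\ne e_2$ implies $e_1\cap e_2=\varnothing$; $\chi'(\Gamma)$ is the least such $k$. The $c$-uniform hyperflower with $p$ petals and $k$ central vertices is the hypergraph with a set $h$ of $k$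 central vertices and $p$ edges of size $c$, each consisting of $h$ together with $c-k$ further vertices, where distinct edges intersect exactly in $h$. *)

From HB Require Import structures.
From mathcomp Require Import all_boot all_order all_algebra.
From mathcomp Require Export reals.
Set Implicit Arguments. Unset Strict Implicit. Unset Printing Implicit Defensive.
Import Order.TTheory GRing.Theory Num.Theory.
Local Open Scope ring_scope.

Definition deg (V : finType) (E : {set {set V}}) (v : V) : nat :=
  #|[set e in E | v \in e]|.

Definition avg_deg (R : numFieldType) (V : finType) (E : {set {set V}}) : R :=
  (\sum_(v : V) (deg E v)%:R) / (#|V|)%:R.

Definition c_uniform (V : finType) (E : {set {set V}}) (c : nat) : Prop :=
  forall e, e \in E -> #|e| = c.

Definition no_isolated (V : finType) (E : {set {set V}}) : Prop :=
  forall v : V, (1 <= deg E v)%N.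

Definition edge_of (V : finType) (E : {set {set V}}) (j : 'I_#|E|) : {set V} :=
  enum_val j.

Definition vert_of (V : finType) (i : 'I_#|V|) : V := enum_val i.

Definition incidence (R : numFieldType) (V : finType) (E : {set {set V}})
  : 'M[R]_(#|V|, #|E|) :=
  \matrix_(i, j) (if vert_of i \in edge_of j then 1 else 0).

Definition degmx (R : numFieldType) (V : finType) (E : {set {set V}})
  : 'M[R]_(#|V|) :=
  diag_mx (\row_i (deg E (vert_of i))%:R).

Definition edge_laplacian (R : numFieldType) (V : finType) (E : {set {set V}})
  : 'M[R]_(#|E|) :=
  (incidence R E)^T *m invmx (degmx R E) *m incidence R E.

Definition strong_colorable (V : finType) (E : {set {set V}}) (k : nat) : bool :=
  [exists col : {ffun {set V} -> 'I_k},
     [forall e1 in E, forall e2 in E,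
        ((e1 != e2) && (col e1 == col e2)) ==> [disjoint e1 & e2]]].

Lemma strong_colorable_exists (V : finType) (E : {set {set V}}) :
  exists k, strong_colorable E k.
Proof.
exists #|{set V}|; apply/existsP; exists [ffun e => enum_rank e].
apply/forallP=> e1; apply/implyP=> _; apply/forallP=> e2; apply/implyP=> _.
apply/implyP=> /andP[ne]; rewrite !ffunE => /eqP/enum_rank_inj eq12.
by rewrite eq12 eqxx in ne.
Qed.

Definition chi_edge (V : finType) (E : {set {set V}}) : nat :=
  ex_minn (strong_colorable_exists E).

(* E is the c-uniform hyperflower with p petals and k central vertices
   (vertex set V = h together with the petal vertices) *)
Definition is_hyperflower (V : finType) (E : {set {set V}}) (c p k : nat) : Prop :=
  exists h : {set V},
    [/\ #|h| = k, #|E| = p,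
        (forall e, e \in E -> #|e| = c /\ h \subset e),
        (forall e1 e2, e1 \in E -> e2 \in E -> e1 != e2 -> e1 :&: e2 = h) &
        (forall v : V, exists2 e, e \in E & v \in e)].

(* The edge Laplacian L of a c-uniform hypergraph without isolated
   vertices is symmetric, has all row sums equal to c and trace N, and
   L e f = 0 whenever the edges e and f are disjoint; hence every colour class of
   a strong edge-colouring indexes a diagonal principal submatrix of L. Hoffman's
   argument applies: the Rayleigh quotient bound mu1 |x|^2 <= x L x^T, tested on
   each class indicator shifted to be orthogonal to the all-ones vector and
   summed over the chi' classes, gives (c - mu1) M <= chi' (N - mu1 M) after
   Cauchy-Schwarz on the class sizes. For the hyperflower,
   L = (k/p) J + (c - k) I has least eigenvalue c - k and N/M = k/p + c - k,
   while any two petals meet, so chi' = p, which is exactly the bound. *)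

From HB Require Import structures.
From mathcomp Require Import all_boot all_order all_algebra.
From mathcomp Require Import reals complex.
From mathcomp Require Import ring lra zify.

Set Implicit Arguments.
Unset Strict Implicit.
Unset Printing Implicit Defensive.
Import Order.TTheory GRing.Theory Num.Theory.
Local Open Scope ring_scope.
Local Open Scope sesquilinear_scope.

Lemma normalmx_spectral_diag_eigenvalue (C : numClosedFieldType) n (A : 'M[C]_n) i :
  A \is normalmx -> eigenvalue A (spectral_diag A 0 i).
Proof.
move=> /orthomx_spectralP; set P := spectralmx A; set d := spectral_diag A.
have Pu : P \is unitarymx by exact: spectral_unitarymx.
rewrite invmx_unitary // => Adec.
have PA : P *m A = diag_mx d *m P.
  by rewrite Adec !mulmxA (unitarymxP Pu) mul1mx.
apply/eigenvalueP; exists (row i P).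
  by rewrite -row_mul PA mul_diag_mx; apply/rowP => j; rewrite !mxE.
apply/eqP => Pi0; have := congr1 (row i) (unitarymxP Pu).
rewrite row_mul Pi0 mul0mx => /rowP/(_ i); rewrite !mxE eqxx /=.
by move=> /eqP; rewrite eq_sym oner_eq0.
Qed.

Lemma hermitian_form_ge (C : numClosedFieldType) n (A : 'M[C]_n) (mu : C) :
  A \is hermsymmx -> (forall i, mu <= spectral_diag A 0 i) ->
  forall x : 'rV_n, mu * (x *m x^t*) 0 0 <= (x *m A *m x^t*) 0 0.
Proof.
move=> /hermitian_normalmx /orthomx_spectralP; set P := spectralmx A.
set d := spectral_diag A => Adec mu_le x.
have Pu : P \is unitarymx by exact: spectral_unitarymx.
rewrite invmx_unitary // in Adec.
pose y := x *m P^t*.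
have form_diag (D : 'rV_n) : (y *m diag_mx D *m y^t*) 0 0 = \sum_j D 0 j * (y 0 j * (y 0 j)^*).
  rewrite mul_mx_diag !mxE; apply: eq_bigr => j _.
  by rewrite !mxE mulrCA mulrA [_ * D 0 j]mulrC.
have yt : y^t* = P *m x^t* by rewrite /y trmx_mul map_mxM trmxCK.
have -> : x *m A *m x^t* = y *m diag_mx d *m y^t* by rewrite yt Adec /y !mulmxA.
have -> : x *m x^t* = y *m diag_mx (const_mx 1) *m y^t*.
  rewrite diag_const_mx mulmx1 yt /y !mulmxA -(mulmxA x).
  by rewrite -invmx_unitary // mulVmx ?unitarymx_unit // mulmx1.
rewrite !form_diag mulr_sumr; apply: ler_sum => j _.
by rewrite mxE mul1r ler_wpM2r ?mul_conjC_ge0.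
Qed.

Lemma symmetric_form_ge (R : rcfType) n (A : 'M[R]_n) (mu : R) :
  A^T = A -> (forall a, eigenvalue A a -> mu <= a) ->
  forall x : 'rV_n, mu * (x *m x^T) 0 0 <= (x *m A *m x^T) 0 0.
Proof.
move=> Asym mu_le x.
(* Over R[i] the matrix is hermitian, so the spectral theorem applies. *)
pose f := real_complex R.
have fconj (r : R) : (f r)^* = f r by apply/CrealP/complex_realP; exists r.
have map_tr (m k : nat) (B : 'M[R]_(m, k)) : (map_mx f B)^t* = map_mx f B^T.
  by apply/matrixP => i j; rewrite !mxE fconj.
have Aherm : map_mx f A \is hermsymmx.
  by apply/is_hermitianmxP; rewrite expr0 scale1r map_tr Asym.
have fmx (M : 'M_1) : f (M 0 0) = (M ^ f) 0 0 by rewrite mxE.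
rewrite -lecR rmorphM /= -/f !fmx !map_mxM -!map_tr.
apply: hermitian_form_ge => // i.
have d_real : spectral_diag (map_mx f A) 0 i \is Num.real.
  exact: mxOverP (hermitian_spectral_diag_real Aherm) _ _.
rewrite -(RRe_real d_real) lecR; apply: mu_le.
rewrite -(eigenvalue_map (real_complex R)) [X in eigenvalue _ X](RRe_real d_real).
exact/normalmx_spectral_diag_eigenvalue/hermitian_normalmx.
Qed.

Lemma sqr_sum_le (R : realFieldType) k (x : 'I_k -> R) :
  (\sum_a x a) ^+ 2 <= k%:R * \sum_a x a ^+ 2.
Proof.
have : 0 <= \sum_a \sum_b (x a - x b) ^+ 2.
  by apply: sumr_ge0 => a _; apply: sumr_ge0 => b _; rewrite sqr_ge0.
have expand a : \sum_b (x a - x b) ^+ 2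
    = k%:R * x a ^+ 2 - 2 * x a * (\sum_b x b) + \sum_b x b ^+ 2.
  rewrite (eq_bigr (fun b => x a ^+ 2 - 2 * x a * x b + x b ^+ 2)); last first.
    by move=> b _; rewrite sqrrB; ring.
  by rewrite !big_split /= sumrN sumr_const card_ord mulr_sumr [k%:R * _]mulr_natl.
rewrite (eq_bigr _ (fun a _ => expand a)) !big_split /= sumrN -mulr_sumr.
rewrite -mulr_suml -mulr_sumr sumr_const card_ord.
set S := \sum_b x b; set Q := \sum_b x b ^+ 2.
rewrite -[Q *+ k]mulr_natl; lra.
Qed.

Definition quad_form {R : pzSemiRingType} {n} (A : 'M[R]_n) (x : 'I_n -> R) : R :=
  \sum_i \sum_j x i * A i j * x j.

Lemma symmetric_quad_form_ge (R : rcfType) n (A : 'M[R]_n) (mu : R) :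
  A^T = A -> (forall a, eigenvalue A a -> mu <= a) ->
  forall x, mu * \sum_i x i ^+ 2 <= quad_form A x.
Proof.
move=> Asym mu_le x; have := symmetric_form_ge Asym mu_le (\row_i x i).
rewrite !mxE (eq_bigr (fun i => x i ^+ 2)) => [|i _]; last by rewrite !mxE expr2.
rewrite /quad_form exchange_big; congr (_ <= _); apply: eq_bigr => j _.
by rewrite !mxE mulr_suml; apply: eq_bigr => i _; rewrite !mxE.
Qed.

Section HoffmanBound.
Variables (R : realFieldType) (n : nat) (A : 'M[R]_n) (c mu : R).
Hypothesis row_sum : forall i, \sum_j A i j = c.
Hypothesis col_sum : forall j, \sum_i A i j = c.
Hypothesis rayleigh : forall x, mu * \sum_i x i ^+ 2 <= quad_form A x.
Hypothesis n_gt0 : (0 < n)%N.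

Lemma quad_form_shift (u : 'I_n -> R) (t : R) :
  quad_form A (fun i => u i - t)
  = quad_form A u - 2 * t * c * (\sum_i u i) + t ^+ 2 * c * n%:R.
Proof.
rewrite /quad_form.
have row_expand i : \sum_j (u i - t) * A i j * (u j - t)
   = \sum_j u i * A i j * u j - t * (\sum_j A i j * u j) - u i * t * c + t ^+ 2 * c.
  rewrite -(row_sum i) !mulr_sumr -!sumrB -big_split /=.
  by apply: eq_bigr => j _; ring.
rewrite (eq_bigr _ (fun i _ => row_expand i)) !big_split /= !sumrN -!mulr_sumr.
rewrite [X in t * X]exchange_big /= sumr_const card_ord.
have -> : \sum_j \sum_i A i j * u j = c * \sum_j u j.
  by rewrite mulr_sumr; apply: eq_bigr => j _; rewrite -mulr_suml col_sum mulrC.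
rewrite -!mulr_suml -mulr_natr; ring.
Qed.

Lemma rayleigh_bound_le_row_sum : mu <= c.
Proof.
have := rayleigh (fun=> 1).
have -> : quad_form A (fun=> 1) = c * n%:R.
  rewrite /quad_form (eq_bigr (fun=> c)) ?sumr_const ?card_ord ?mulr_natr // => i _.
  by rewrite -(row_sum i); apply: eq_bigr => j _; rewrite mul1r mulr1.
rewrite (eq_bigr (fun=> 1)) ?expr1n // sumr_const card_ord -mulr_natr.
by rewrite !mul1r ler_pM2r ?ltr0n.
Qed.

Variables (k : nat) (col : 'I_n -> 'I_k).
Hypothesis col_proper : forall i j, i != j -> col i = col j -> A i j = 0.

Let ind (a : 'I_k) (i : 'I_n) : R := (col i == a)%:R.
Let size_class (a : 'I_k) : R := \sum_i ind a i.

Lemma quad_form_class_ind a : quad_form A (ind a) = \sum_i ind a i * A i i.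
Proof.
rewrite /quad_form; apply: eq_bigr => i _; rewrite (bigD1 i) //= big1 ?addr0.
  by rewrite /ind; case: (col i == a); rewrite ?mulr1 ?mul1r ?mul0r.
move=> j ji; rewrite /ind; case: eqP => [ea|]; last by rewrite !mul0r.
case: eqP => [eb|]; last by rewrite mulr0.
by rewrite col_proper ?mulr0 ?mul0r // 1?eq_sym // ea eb.
Qed.

(* The test vectors are the class indicators made orthogonal to the
   all-ones vector. *)
Lemma color_class_bound a :
  mu * (size_class a - size_class a ^+ 2 / n%:R)
  <= \sum_i ind a i * A i i - c * size_class a ^+ 2 / n%:R.
Proof.
have nR : n%:R != 0 :> R by rewrite pnatr_eq0 -lt0n.
set t := size_class a / n%:R.
have ind_sq i : ind a i ^+ 2 = ind a i by rewrite /ind; case: (col i == a); rewrite ?expr1n ?expr0n.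
have norm : \sum_i (ind a i - t) ^+ 2 = size_class a - size_class a ^+ 2 / n%:R.
  rewrite (eq_bigr (fun i => ind a i - 2 * t * ind a i + t ^+ 2)); last first.
    by move=> i _; rewrite sqrrB ind_sq; ring.
  rewrite !big_split /= sumrN -mulr_sumr sumr_const card_ord -mulr_natr.
  by rewrite /t /size_class; field.
have := rayleigh (fun i => ind a i - t).
rewrite norm quad_form_shift quad_form_class_ind -/(size_class a).
set D := \sum_i _.
suff -> : D - 2 * t * c * size_class a + t ^+ 2 * c * n%:R
          = D - c * size_class a ^+ 2 / n%:R by [].
by rewrite /t; field.
Qed.

Lemma sum_ind i : \sum_a ind a i = 1.
Proof.
rewrite (bigD1 (col i)) //= big1 ?addr0 /ind ?eqxx // => b.
by rewrite eq_sym => /negPf ->.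
Qed.

Lemma sum_size_class : \sum_a size_class a = n%:R.
Proof.
rewrite /size_class exchange_big /= (eq_bigr (fun=> 1)) ?sumr_const ?card_ord //.
by move=> i _; exact: sum_ind.
Qed.

Lemma sum_class_diag : \sum_a \sum_i ind a i * A i i = \tr A.
Proof.
rewrite exchange_big /=; apply: eq_bigr => i _.
by rewrite -mulr_suml sum_ind mul1r.
Qed.

Lemma class_size_sq_bound :
  (c - mu) * (\sum_a size_class a ^+ 2 / n%:R) <= \tr A - mu * n%:R.
Proof.
have : \sum_a mu * (size_class a - size_class a ^+ 2 / n%:R)
       <= \sum_a (\sum_i ind a i * A i i - c * size_class a ^+ 2 / n%:R).
  by apply: ler_sum => a _; exact: color_class_bound.
rewrite -mulr_sumr !sumrB sum_size_class sum_class_diag.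
under [X in _ <= _ - X]eq_bigr do rewrite -mulrA.
rewrite -mulr_sumr; lra.
Qed.

Lemma trace_ge_rayleigh_bound : mu * n%:R <= \tr A.
Proof.
have S_ge0 : 0 <= \sum_a size_class a ^+ 2 / n%:R.
  by apply: sumr_ge0 => a _; rewrite divr_ge0 ?sqr_ge0.
have c_mu_ge0 : 0 <= c - mu by rewrite subr_ge0 rayleigh_bound_le_row_sum.
have := mulr_ge0 c_mu_ge0 S_ge0.
have := class_size_sq_bound; lra.
Qed.

Lemma hoffman_bound : (c - mu) * n%:R <= k%:R * (\tr A - mu * n%:R).
Proof.
have c_mu_ge0 : 0 <= c - mu by rewrite subr_ge0 rayleigh_bound_le_row_sum.
have n_le : n%:R <= k%:R * (\sum_a size_class a ^+ 2 / n%:R).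
  rewrite -mulr_suml mulrA ler_pdivlMr ?ltr0n // -expr2 -sum_size_class.
  exact: sqr_sum_le.
apply: le_trans (ler_wpM2l c_mu_ge0 n_le) _.
by rewrite mulrCA ler_wpM2l ?ler0n ?class_size_sq_bound.
Qed.

End HoffmanBound.

Lemma natr_card_sum (R : pzSemiRingType) (T : finType) (A : {pred T}) :
  #|A|%:R = \sum_x (x \in A)%:R :> R.
Proof.
rewrite -sum1_card natr_sum big_mkcond /=.
by apply: eq_bigr => x _; case: (x \in A).
Qed.

Section EdgeLaplacian.
Variables (R : numFieldType) (V : finType) (E : {set {set V}}).

Lemma big_vert_of (F : V -> R) : \sum_(i < #|V|) F (vert_of i) = \sum_v F v.
Proof. by rewrite /vert_of -(big_enum_val (A := predT)); apply: eq_bigl. Qed.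

Lemma big_edge_of (F : {set V} -> R) :
  \sum_(j < #|E|) F (edge_of j) = \sum_(e in E) F e.
Proof. by rewrite /edge_of -(big_enum_val (A := mem E)). Qed.

Lemma natr_deg v : (deg E v)%:R = \sum_(e in E) (v \in e)%:R :> R.
Proof.
rewrite natr_card_sum [RHS]big_mkcond /=; apply: eq_bigr => e _.
by rewrite inE; case: (e \in E).
Qed.

Lemma sum_incidence v : \sum_(j < #|E|) (v \in edge_of j)%:R = (deg E v)%:R :> R.
Proof. by rewrite (big_edge_of (fun e => (v \in e)%:R)) natr_deg. Qed.

Lemma sum_deg_uniform c : c_uniform E c -> \sum_v (deg E v)%:R = (c * #|E|)%:R :> R.
Proof.
move=> cE; under eq_bigr do rewrite natr_deg.
rewrite exchange_big /= (eq_bigr (fun=> c%:R)) ?sumr_const ?natrM ?mulr_natr //.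
by move=> e eE; rewrite -(cE _ eE) natr_card_sum.
Qed.

Hypothesis E_no_isolated : no_isolated E.

Lemma natr_deg_neq0 v : (deg E v)%:R != 0 :> R.
Proof. by rewrite pnatr_eq0 -lt0n; exact: E_no_isolated. Qed.

Lemma invmx_degmx :
  invmx (degmx R E) = diag_mx (\row_i ((deg E (vert_of i))%:R)^-1).
Proof.
set D := degmx R E; set D' := diag_mx _.
have DD' : D *m D' = 1%:M.
  apply/matrixP => i j; rewrite /D /degmx mul_diag_mx !mxE.
  case: (eqVneq i j) => [->|_]; last by rewrite !mulr0n mulr0.
  by rewrite !mulr1n mulfV ?natr_deg_neq0.
have [Du _] := mulmx1_unit DD'.
by rewrite -[invmx D]mulmx1 -DD' mulmxA mulVmx // mul1mx.
Qed.

Lemma edge_laplacianE j j' : edge_laplacian R E j j' =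
  \sum_v (v \in edge_of j)%:R * (v \in edge_of j')%:R / (deg E v)%:R.
Proof.
rewrite /edge_laplacian invmx_degmx mul_mx_diag !mxE -big_vert_of.
apply: eq_bigr => i _; rewrite !mxE.
by rewrite mulrAC; case: (_ \in _); case: (_ \in _).
Qed.

Lemma tr_edge_laplacian : (edge_laplacian R E)^T = edge_laplacian R E.
Proof.
apply/matrixP => j j'; rewrite mxE !edge_laplacianE.
by apply: eq_bigr => v _; rewrite [_ * (_ \in edge_of j')%:R]mulrC.
Qed.

Lemma edge_laplacian_row_sum c : c_uniform E c ->
  forall j, \sum_j' edge_laplacian R E j j' = c%:R.
Proof.
move=> cE j; under eq_bigr do rewrite edge_laplacianE.
rewrite exchange_big /= -(cE _ (enum_valP j)) natr_card_sum.
apply: eq_bigr => v _; under eq_bigr do rewrite mulrAC.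
by rewrite -mulr_sumr sum_incidence mulfVK ?natr_deg_neq0.
Qed.

Lemma edge_laplacian_col_sum c : c_uniform E c ->
  forall j', \sum_j edge_laplacian R E j j' = c%:R.
Proof.
move=> cE j'; rewrite -(edge_laplacian_row_sum cE j').
by apply: eq_bigr => j _; rewrite -[in LHS]tr_edge_laplacian mxE.
Qed.

Lemma mxtrace_edge_laplacian : \tr (edge_laplacian R E) = #|V|%:R.
Proof.
rewrite /mxtrace; under eq_bigr do rewrite edge_laplacianE.
rewrite exchange_big /= -sum1_card natr_sum; apply: eq_bigr => v _.
under eq_bigr do rewrite -natrM mulnb andbb.
by rewrite -mulr_suml sum_incidence mulfV ?natr_deg_neq0.
Qed.

Lemma edge_laplacian_disjoint j j' :
  [disjoint edge_of j & edge_of j'] -> edge_laplacian R E j j' = 0.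
Proof.
move=> dis; rewrite edge_laplacianE big1 // => v _.
case vj: (v \in edge_of j); last by rewrite !mul0r.
by rewrite (disjointFr dis vj) mulr0 mul0r.
Qed.

End EdgeLaplacian.

Lemma strong_colorable_chi_edge {V : finType} (E : {set {set V}}) :
  strong_colorable E (chi_edge E).
Proof. by rewrite /chi_edge; case: ex_minnP. Qed.

Lemma chi_edge_min {V : finType} (E : {set {set V}}) k :
  strong_colorable E k -> (chi_edge E <= k)%N.
Proof. by rewrite /chi_edge; case: ex_minnP => m _; apply. Qed.

Lemma chi_edge_gt0 {V : finType} (E : {set {set V}}) :
  (0 < #|E|)%N -> (0 < chi_edge E)%N.
Proof.
case/card_gt0P => e _; have /existsP[col _] := strong_colorable_chi_edge E.
exact: leq_ltn_trans (leq0n _) (ltn_ord (col e)).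
Qed.

Lemma edge_laplacian_strong_coloring (R : numFieldType) {V : finType}
    (E : {set {set V}}) k :
  no_isolated E -> strong_colorable E k ->
  exists col : 'I_#|E| -> 'I_k, forall j j', j != j' -> col j = col j' ->
    edge_laplacian R E j j' = 0.
Proof.
move=> E_no_isolated /existsP[col /forallP col_proper].
exists (fun j => col (edge_of j)) => j j' neq_jj' eq_col.
apply: edge_laplacian_disjoint => //.
have /implyP/(_ (enum_valP j))/forallP/(_ (edge_of j')) := col_proper (edge_of j).
move=> /implyP/(_ (enum_valP j'))/implyP; apply; rewrite eq_col eqxx andbT.
by apply: contra neq_jj' => /eqP/enum_val_inj ->.
Qed.

Lemma c_div_avg_deg (R : numFieldType) {V : finType} (E : {set {set V}}) c :
  (0 < c)%N -> c_uniform E c -> (0 < #|E|)%N ->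
  c%:R / avg_deg R E = #|V|%:R / #|E|%:R.
Proof.
move=> c_gt0 cE M_gt0; have /card_gt0P[e eE] := M_gt0.
have /card_gt0P[v _] : (0 < #|e|)%N by rewrite cE.
have N_gt0 : (0 < #|V|)%N by apply/card_gt0P; exists v.
rewrite /avg_deg (sum_deg_uniform _ cE) natrM; field.
by rewrite !pnatr_eq0 -!lt0n M_gt0 N_gt0 c_gt0.
Qed.

Lemma edge_laplacian_hoffman (R : rcfType) {V : finType} (E : {set {set V}}) c mu :
  c_uniform E c -> (0 < #|E|)%N -> no_isolated E ->
  (forall a, eigenvalue (edge_laplacian R E) a -> mu <= a) ->
  mu * #|E|%:R <= #|V|%:R /\
  (c%:R - mu) * #|E|%:R <= (chi_edge E)%:R * (#|V|%:R - mu * #|E|%:R).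
Proof.
move=> cE M_gt0 E_no_isolated mu_le.
have [col col_proper] := edge_laplacian_strong_coloring R E_no_isolated
  (strong_colorable_chi_edge E).
have rayleigh := symmetric_quad_form_ge (tr_edge_laplacian R E_no_isolated) mu_le.
have row_sum := edge_laplacian_row_sum R E_no_isolated cE.
have col_sum := edge_laplacian_col_sum R E_no_isolated cE.
rewrite -(mxtrace_edge_laplacian R E_no_isolated); split.
  exact (trace_ge_rayleigh_bound row_sum col_sum rayleigh M_gt0 col_proper).
exact (hoffman_bound row_sum col_sum rayleigh M_gt0 col_proper).
Qed.

Lemma chi_edge_intersecting {V : finType} (E : {set {set V}}) :
  (0 < #|E|)%N ->
  (forall e1 e2, e1 \in E -> e2 \in E -> ~~ [disjoint e1 & e2]) ->
  chi_edge E = #|E|.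
Proof.
move=> /card_gt0P[e0 e0E] E_meet; apply/eqP; rewrite eqn_leq; apply/andP; split.
  apply: chi_edge_min; apply/existsP; exists [ffun e => enum_rank_in e0E e].
  apply/forallP => e1; apply/implyP => e1E; apply/forallP => e2; apply/implyP => e2E.
  apply/implyP => /andP[ne]; rewrite !ffunE => /eqP/(enum_rank_in_inj e1E e2E) eq12.
  by rewrite eq12 eqxx in ne.
have /existsP[col /forallP col_proper] := strong_colorable_chi_edge E.
have col_inj : {in E &, injective col}.
  move=> e1 e2 e1E e2E eq_col; apply/eqP; apply: contraR (E_meet _ _ e1E e2E) => ne.
  have /implyP/(_ e1E)/forallP/(_ e2)/implyP/(_ e2E)/implyP := col_proper e1.
  by apply; rewrite ne eq_col eqxx.
by rewrite -(card_in_imset col_inj) -[X in (_ <= X)%N]card_ord max_card.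
Qed.

Section ConstPlusScalar.
Variables (F : fieldType) (n : nat) (b a : F).

Let J := const_mx b + a%:M : 'M[F]_n.

Lemma eigenvalue_const_plus_scalar mu : eigenvalue J mu -> mu = a \/ mu = a + n%:R * b.
Proof.
case/eigenvalueP => v vJ v_neq0.
have vJE j : b * \sum_i v 0 i + a * v 0 j = mu * v 0 j.
  move/rowP: vJ => /(_ j); rewrite mulmxDr mul_mx_scalar !mxE => <-.
  by congr (_ + _); rewrite mulr_sumr; apply: eq_bigr => i _; rewrite mxE mulrC.
set S := \sum_i v 0 i in vJE.
have sumE : (n%:R * b + a - mu) * S = 0.
  have : \sum_j (b * S + a * v 0 j) = \sum_j mu * v 0 j.
    by apply: eq_bigr => j _; exact: vJE.
  rewrite big_split /= sumr_const card_ord -!mulr_sumr -/S -[b * S *+ n]mulr_natl => e.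
  by transitivity (n%:R * (b * S) + a * S - mu * S); [ring | rewrite e subrr].
have [S0|S_neq0] := eqVneq S 0.
  have [j vj] : exists j, v 0 j != 0.
    apply/existsP; rewrite -negb_forall; apply: contra v_neq0 => /forallP v0.
    by apply/eqP/rowP => j; rewrite mxE; exact/eqP/v0.
  have /eqP := vJE j; rewrite S0 mulr0 add0r -subr_eq0 -mulrBl mulf_eq0.
  by rewrite (negPf vj) orbF subr_eq0 => /eqP <-; left.
move/eqP: sumE; rewrite mulf_eq0 (negPf S_neq0) orbF subr_eq0 => /eqP <-.
by right; rewrite addrC.
Qed.

Lemma eigenvalue_scalar_of_const_plus_scalar : (1 < n)%N -> eigenvalue J a.
Proof.
move=> n_gt1; pose i0 := Ordinal (ltnW n_gt1); pose i1 := Ordinal n_gt1.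
apply/eigenvalueP; exists (\row_j ((j == i0)%:R - (j == i1)%:R)).
  rewrite mulmxDr mul_mx_scalar -[RHS]add0r; congr (_ + _).
  have sum_delta (i2 : 'I_n) : \sum_i (i == i2)%:R * b = b.
    by rewrite (bigD1 i2) //= eqxx mul1r big1 ?addr0 // => i /negPf ->; rewrite mul0r.
  apply/rowP => j; rewrite !mxE; under eq_bigr do rewrite !mxE mulrBl.
  by rewrite sumrB !sum_delta subrr.
apply/eqP => /rowP/(_ i0); rewrite !mxE eqxx (_ : i0 == i1 = false) // subr0.
exact/eqP/oner_neq0.
Qed.

End ConstPlusScalar.

Lemma min_eigenvalue_const_plus_scalar (R : realFieldType) n (b a mu : R) :
  (1 < n)%N -> 0 < b -> eigenvalue (const_mx b + a%:M : 'M_n) mu ->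
  (forall x, eigenvalue (const_mx b + a%:M : 'M_n) x -> mu <= x) -> mu = a.
Proof.
move=> n_gt1 b_gt0 /eigenvalue_const_plus_scalar[] // -> /(_ a).
move/(_ (eigenvalue_scalar_of_const_plus_scalar b a n_gt1)).
have : 0 < n%:R * b by rewrite mulr_gt0 ?ltr0n 1?ltnW.
lra.
Qed.

Section Hyperflower.
Variables (R : numFieldType) (V : finType) (E : {set {set V}}) (c p k : nat).
Variable h : {set V}.
Hypothesis card_h : #|h| = k.
Hypothesis card_E : #|E| = p.
Hypothesis E_petal : forall e, e \in E -> #|e| = c /\ h \subset e.
Hypothesis E_meet : forall e1 e2, e1 \in E -> e2 \in E -> e1 != e2 -> e1 :&: e2 = h.
Hypothesis E_cover : forall v : V, exists2 e, e \in E & v \in e.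

Lemma hyperflower_no_isolated : no_isolated E.
Proof.
move=> v; have [e eE ve] := E_cover v.
by apply/card_gt0P; exists e; rewrite inE eE ve.
Qed.

Lemma deg_hyperflower_center v : v \in h -> deg E v = p.
Proof.
move=> vh; rewrite /deg -card_E; apply: eq_card => e; rewrite inE.
by case eE: (e \in E) => //=; have [_ /subsetP->] := E_petal eE.
Qed.

Lemma deg_hyperflower_petal e v : e \in E -> v \in e -> v \notin h -> deg E v = 1%N.
Proof.
move=> eE ve vNh; apply/eqP/cards1P; exists e; apply/setP => e'; rewrite !inE.
apply/andP/eqP => [[e'E ve']|->]; last by [].
by apply/eqP; apply: contraR vNh => ne; rewrite -(E_meet e'E eE ne) inE ve' ve.
Qed.

Lemma hyperflower_edge_laplacian :
  edge_laplacian R E = const_mx (k%:R / p%:R) + (c%:R - k%:R)%:M.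
Proof.
apply/matrixP => j j'; rewrite (edge_laplacianE R hyperflower_no_isolated) !mxE.
have [ejE [card_ej h_ej]] : edge_of j \in E /\ (#|edge_of j| = c /\ h \subset edge_of j).
  by split; [exact: enum_valP | apply/E_petal/enum_valP].
(* A centre vertex lies in every petal and has degree p; any other vertex
   lies in a single petal and has degree 1. *)
have term v : (v \in edge_of j)%:R * (v \in edge_of j')%:R / (deg E v)%:R
    = (v \in h)%:R / p%:R + (v \in edge_of j :\: h)%:R *+ (j == j') :> R.
  have [ej'E [_ h_ej']] : edge_of j' \in E /\ (#|edge_of j'| = c /\ h \subset edge_of j').
    by split; [exact: enum_valP | apply/E_petal/enum_valP].
  case vh: (v \in h).
    rewrite (subsetP h_ej v vh) (subsetP h_ej' v vh) inE vh deg_hyperflower_center //.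
    by rewrite /= mulr1n mul1r mulr0n mul0rn addr0.
  rewrite inE vh /= mul0r add0r.
  have [<-|ne] := eqVneq j j'.
    rewrite mulr1n; case vj: (v \in edge_of j); last by rewrite !mul0r.
    by rewrite (deg_hyperflower_petal ejE vj) ?vh // mul1r invr1 mulr1.
  rewrite mulr0n; case vj: (v \in edge_of j); last by rewrite !mul0r.
  case vj': (v \in edge_of j'); last by rewrite mulr0 mul0r.
  have ne_e : edge_of j != edge_of j' by apply: contra ne => /eqP/enum_val_inj ->.
  by move: vh; rewrite -(E_meet ejE ej'E ne_e) inE vj vj'.
rewrite (eq_bigr _ (fun v _ => term v)) big_split /= -mulr_suml -natr_card_sum.
rewrite sumrMnl -natr_card_sum cardsD (setIidPr h_ej) card_ej card_h natrB //.
by rewrite -card_ej -card_h subset_leq_card.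
Qed.
Lemma c_div_avg_deg_hyperflower : (0 < c)%N -> (0 < p)%N ->
  c%:R / avg_deg R E = k%:R / p%:R + (c%:R - k%:R).
Proof.
move=> c_gt0 p_gt0; have M_gt0 : (0 < #|E|)%N by rewrite card_E.
have cE : c_uniform E c by move=> e /E_petal[].
rewrite c_div_avg_deg // -(mxtrace_edge_laplacian R hyperflower_no_isolated).
rewrite hyperflower_edge_laplacian /mxtrace.
under eq_bigr do rewrite !mxE eqxx mulr1n.
by rewrite sumr_const card_ord card_E -[_ *+ p]mulr_natr mulfK ?pnatr_eq0 -?lt0n.
Qed.

Lemma chi_edge_hyperflower : (0 < k)%N -> (0 < p)%N -> chi_edge E = p.
Proof.
rewrite -card_h -card_E => /card_gt0P[x xh] M_gt0; apply: chi_edge_intersecting => //.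
move=> e1 e2 /E_petal[_ /subsetP h_e1] /E_petal[_ /subsetP h_e2].
by apply/negP => /disjointFr/(_ (h_e1 x xh)); rewrite h_e2.
Qed.

End Hyperflower.

Lemma edge_laplacian_spectral_bound (R : rcfType) {V : finType}
    (E : {set {set V}}) c mu :
  (0 < c)%N -> c_uniform E c -> (0 < #|E|)%N -> no_isolated E ->
  (forall a, eigenvalue (edge_laplacian R E) a -> mu <= a) ->
  mu <= c%:R / avg_deg R E /\
  (mu != c%:R / avg_deg R E ->
   (c%:R - mu) / (c%:R / avg_deg R E - mu) <= (chi_edge E)%:R).
Proof.
move=> c_gt0 cE M_gt0 E_no_isolated mu_min.
have [trace_bound hoffman] := edge_laplacian_hoffman cE M_gt0 E_no_isolated mu_min.
have M_pos : 0 < #|E|%:R :> R by rewrite ltr0n.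
rewrite c_div_avg_deg //; have mu_le : mu <= #|V|%:R / #|E|%:R by rewrite ler_pdivlMr.
split=> // mu_neq; have gap : 0 < #|V|%:R / #|E|%:R - mu by rewrite subr_gt0 lt_neqAle mu_neq.
by rewrite ler_pdivrMr // -(ler_pM2r M_pos) -mulrA [(_ / _ - _) * _]mulrBl divfK ?gt_eqF.
Qed.

Theorem mainTheorem15 (R : realType) :
  (forall (V : finType) (E : {set {set V}}) (c : nat) (mu1 : R),
     (1 <= c)%N -> c_uniform E c -> (1 <= #|E|)%N -> no_isolated E ->
     eigenvalue (edge_laplacian R E) mu1 ->
     (forall a : R, eigenvalue (edge_laplacian R E) a -> mu1 <= a) ->
     mu1 <= c%:R / avg_deg R E /\
     (if mu1 == c%:R / avg_deg R E then (1 <= chi_edge E)%N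
      else (c%:R - mu1) / (c%:R / avg_deg R E - mu1) <= (chi_edge E)%:R))
  /\
  (forall (V : finType) (E : {set {set V}}) (c p k : nat) (mu1 : R),
     (2 <= p)%N -> (1 <= k)%N -> (k <= c - 1)%N ->
     is_hyperflower E c p k ->
     eigenvalue (edge_laplacian R E) mu1 ->
     (forall a : R, eigenvalue (edge_laplacian R E) a -> mu1 <= a) ->
     mu1 <= c%:R / avg_deg R E /\
     (if mu1 == c%:R / avg_deg R E then chi_edge E = 1%N
      else (chi_edge E)%:R = (c%:R - mu1) / (c%:R / avg_deg R E - mu1))).
Proof.
split=> [V E c mu1 c_gt0 cE M_gt0 E_no_isolated _ mu1_min|].
  have [mu1_le ratio_le] := edge_laplacian_spectral_bound c_gt0 cE M_gt0 E_no_isolated mu1_min.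
  by split=> //; case: eqP => [_|/eqP]; [exact: chi_edge_gt0 | exact: ratio_le].
move=> V E c p k mu1 p_ge2 k_gt0 k_lt_c [h [card_h card_E E_petal E_meet E_cover]].
have c_gt0 : (0 < c)%N by lia.
have p_gt0 : (0 < p)%N by lia.
have L_E := hyperflower_edge_laplacian R card_h card_E E_petal E_meet E_cover.
rewrite L_E => mu1_ev mu1_min.
have -> : mu1 = c%:R - k%:R.
  apply: min_eigenvalue_const_plus_scalar mu1_ev mu1_min; first by rewrite card_E.
  by rewrite divr_gt0 ?ltr0n.
rewrite (c_div_avg_deg_hyperflower R card_h card_E E_petal E_meet E_cover) //.
rewrite (chi_edge_hyperflower card_h card_E E_petal) //.
have b_gt0 : 0 < k%:R / p%:R :> R by rewrite divr_gt0 ?ltr0n.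
rewrite lt_eqF ?ltrDr //; split; first by rewrite lerDr ltW.
by rewrite addrK opprB addrC subrK invf_div mulrC divfK // pnatr_eq0 -lt0n.
Qed.
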